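(* Let $D$ be a product distribution on $\{0,1\}^n$ with $\mu_i=P(X_i=1)\in(0,1)$ and $\sigma_i=\sqrt{\mu_i(1-\mu_i)}$, and let $f(x)=\prod_{i\in T_1}x_i\prod_{j\in T_0}(1-x_j)$ with $T_0,T_1$ disjoint and $d=|T_0|+|T_1|$. Then, with respect to the basis $\phi_S(x)=\prod_{i\in S}\frac{x_i-\mu_i}{\sigma_i}$, $$L_1(f)=\prod_{i\in T_1}(\mu_i+\sigma_i)\prod_{j\in T_0}(1-\mu_j+\sigma_j)\le 1.21^d.$$
   Context: Fourier coefficients are $\hat f_S=\mathbb{E}_D[f(X)\phi_S(X)]$ and the spectral norm is $L_1(f)=\sum_{S\subseteq[n]}|\hat f_S|$. (This is the BN-induced basis for the BN with no edges.) *)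

From HB Require Import structures.
From mathcomp Require Import all_boot all_order all_algebra.
Set Implicit Arguments. Unset Strict Implicit. Unset Printing Implicit Defensive.
Import Order.TTheory GRing.Theory Num.Theory.
Local Open Scope ring_scope.

Section Defs.
Variables (R : rcfType) (n : nat).

Definition cube := {ffun 'I_n -> bool}.

Definition prodD (mu : 'I_n -> R) (x : cube) : R :=
  \prod_(i < n) (if x i then mu i else 1 - mu i).

Definition expD (mu : 'I_n -> R) (g : cube -> R) : R :=
  \sum_(x : cube) prodD mu x * g x.

Definition sigma (mu : 'I_n -> R) (i : 'I_n) : R :=
  Num.sqrt (mu i * (1 - mu i)).

Definition phi (mu : 'I_n -> R) (S : {set 'I_n}) (x : cube) : R :=
  \prod_(i in S) (((x i)%:R - mu i) / sigma mu i).

Definition fourier (mu : 'I_n -> R) (g : cube -> R) (S : {set 'I_n}) : R :=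
  expD mu (fun x => g x * phi mu S x).

Definition L1 (mu : 'I_n -> R) (g : cube -> R) : R :=
  \sum_(S : {set 'I_n}) `|fourier mu g S|.

Definition conj_fn (T0 T1 : {set 'I_n}) (x : cube) : R :=
  (\prod_(i in T1) (x i)%:R) * \prod_(j in T0) (1 - (x j)%:R).

End Defs.

From HB Require Import structures.
From mathcomp Require Import all_boot all_order all_algebra.
From mathcomp Require Import ring lra.
Set Implicit Arguments. Unset Strict Implicit. Unset Printing Implicit Defensive.
Import Order.TTheory GRing.Theory Num.Theory.
Local Open Scope ring_scope.

(* A conjunction is a product of one-coordinate functions, and both the
   product distribution and the basis phi_S factor over coordinates.  Hence
   every Fourier coefficient is a product of one-dimensional coefficients,
   and summing over S gives L1 = prod_i (|E[g_i phi_i]| + |E[g_i]|).  For the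
   factor x_i these two numbers are sigma_i and mu_i, for 1 - x_j they are
   sigma_j and 1 - mu_j, and for an unconstrained coordinate 0 and 1.  The
   bound follows from m + sqrt(m(1 - m)) <= (1 + sqrt 2)/2 < 1.21 on [0, 1]. *)

Lemma divr_sqrtr (R : rcfType) (x : R) : 0 <= x -> x / Num.sqrt x = Num.sqrt x.
Proof.
move=> x_ge0; have [sx0 | sx_neq0] := eqVneq (Num.sqrt x) 0.
  by rewrite sx0 invr0 mulr0.
by rewrite -{1}(sqr_sqrtr x_ge0) expr2 mulfK.
Qed.

Lemma add_sqrt_mul_subr_le (R : rcfType) (m : R) : 0 <= m <= 1 ->
  0 <= m + Num.sqrt (m * (1 - m)) <= 121%:R / 100%:R.
Proof.
move=> /andP[m_ge0 m_le1]; rewrite addr_ge0 ?sqrtr_ge0 //= -lerBrDl.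
have c_ge0 : 0 <= 121%:R / 100%:R - m :> R by rewrite subr_ge0; lra.
rewrite -(ger0_norm c_ge0) -sqrtr_sqr ler_wsqrtr //.
(* 2 m^2 - 3.42 m + 1.4641 >= 0, with minimum at m = 0.855. *)
have := sqr_ge0 (m - 855%:R / 1000%:R); rewrite !expr2; nra.
Qed.

Lemma prodr_if_disjoint (R : comPzSemiRingType) (I : finType) (A B : {set I})
    (a b : I -> R) : [disjoint A & B] ->
  \prod_i (if i \in A then a i else if i \in B then b i else 1) =
  (\prod_(i in A) a i) * \prod_(i in B) b i.
Proof.
move=> AB; rewrite (bigID (mem A)) /=; congr (_ * _).
  by apply: eq_bigr => i ->.
rewrite (eq_bigr (fun i => if i \in B then b i else 1)) => [|i /negbTE->//].
rewrite -big_mkcondr; apply: eq_bigl => i /=.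
by case: (boolP (i \in B)) => [/(disjointFl AB) -> | _]; rewrite ?andbF.
Qed.

Definition expB (R : rcfType) (m : R) (g : bool -> R) : R :=
  m * g true + (1 - m) * g false.

Section Fourier.
Variables (R : rcfType) (n : nat) (mu : 'I_n -> R).

Definition phi_coord (i : 'I_n) (b : bool) : R := (b%:R - mu i) / sigma mu i.

Lemma expD_prod (g : 'I_n -> bool -> R) :
  expD mu (fun x => \prod_i g i (x i)) = \prod_i expB (mu i) (g i).
Proof.
rewrite (eq_bigr (fun i => \sum_b (if b then mu i else 1 - mu i) * g i b)).
  by rewrite bigA_distr_bigA; apply: eq_bigr => x _; rewrite /prodD -big_split.
by move=> i _; rewrite big_bool.
Qed.

Lemma fourier_prod (f : cube n -> R) (g : 'I_n -> bool -> R) S :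
    (forall x, f x = \prod_i g i (x i)) ->
  fourier mu f S = \prod_i (if i \in S
    then expB (mu i) (fun b => g i b * phi_coord i b) else expB (mu i) (g i)).
Proof.
move=> fE; transitivity (expD mu (fun x =>
    \prod_i (g i (x i) * if i \in S then phi_coord i (x i) else 1))).
  rewrite /fourier /expD; apply: eq_bigr => x _; congr (_ * _).
  by rewrite fE /phi (big_mkcond (mem S)) -big_split.
rewrite (expD_prod (fun i b => g i b * if i \in S then phi_coord i b else 1)).
by apply: eq_bigr => i _; case: (i \in S); rewrite /expB ?mulr1.
Qed.

Lemma L1_prod (f : cube n -> R) (g : 'I_n -> bool -> R) :
    (forall x, f x = \prod_i g i (x i)) ->
  L1 mu f = \prod_i
    (`|expB (mu i) (fun b => g i b * phi_coord i b)| + `|expB (mu i) (g i)|).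
Proof.
move=> fE; rewrite bigA_distr; apply: eq_bigr => S _.
by rewrite (fourier_prod _ fE) normr_prod; apply: eq_bigr => i _; case: (i \in S).
Qed.
End Fourier.

Section Conjunction.
Variables (R : rcfType) (n : nat) (mu : 'I_n -> R) (T0 T1 : {set 'I_n}).

Definition conj_coord (i : 'I_n) (b : bool) : R :=
  if i \in T1 then b%:R else if i \in T0 then 1 - b%:R else 1.

Lemma conj_fn_prod : [disjoint T0 & T1] ->
  forall x, @conj_fn R n T0 T1 x = \prod_i conj_coord i (x i).
Proof. by move=> T01 x; rewrite prodr_if_disjoint // disjoint_sym. Qed.

Lemma conj_coord_L1 i : 0 <= mu i <= 1 ->
  `|expB (mu i) (fun b => conj_coord i b * phi_coord mu i b)|
    + `|expB (mu i) (conj_coord i)|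
  = if i \in T1 then mu i + sigma mu i
    else if i \in T0 then 1 - mu i + sigma mu i else 1.
Proof.
move=> /andP[mu_ge0 mu_le1].
have var_ge0 : 0 <= mu i * (1 - mu i) by rewrite mulr_ge0 // subr_ge0.
have sigma_ge0 : 0 <= sigma mu i by exact: sqrtr_ge0.
have var_sigma : mu i * (1 - mu i) / sigma mu i = sigma mu i by exact: divr_sqrtr.
rewrite /conj_coord /phi_coord /expB; case: ifP => _; [|case: ifP => _];
  rewrite /= ?mulr1n ?mulr0n
    !(mul1r, mul0r, mulr0, mulr1, addr0, add0r, subrr, subr0, sub0r).
- by rewrite mulrA var_sigma !ger0_norm // addrC.
- rewrite mulNr mulrN normrN mulrA [(1 - mu i) * _]mulrC var_sigma.
  by rewrite !ger0_norm ?subr_ge0 // addrC.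
- have -> : mu i * ((1 - mu i) / sigma mu i) + (1 - mu i) * (- mu i / sigma mu i) = 0
    by ring.
  by rewrite normr0 add0r addrC subrK normr1.
Qed.
End Conjunction.

Theorem mainTheorem6 (R : rcfType) (n : nat) (mu : 'I_n -> R)
  (hmu : forall i, 0 < mu i < 1) (T0 T1 : {set 'I_n})
  (hdisj : [disjoint T0 & T1]) :
  L1 mu (@conj_fn R n T0 T1) =
    (\prod_(i in T1) (mu i + sigma mu i)) *
    (\prod_(j in T0) (1 - mu j + sigma mu j))
  /\ L1 mu (@conj_fn R n T0 T1) <= (121%:R / 100%:R) ^+ (#|T0| + #|T1|).
Proof.
have mu01 i : 0 <= mu i <= 1 by case/andP: (hmu i) => ? ?; rewrite !ltW.
have L1E : L1 mu (@conj_fn R n T0 T1) =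
    (\prod_(i in T1) (mu i + sigma mu i)) *
    (\prod_(j in T0) (1 - mu j + sigma mu j)).
  rewrite (L1_prod _ (conj_fn_prod R hdisj)).
  under eq_bigr do rewrite conj_coord_L1 //.
  by rewrite prodr_if_disjoint // disjoint_sym.
have T1_bound i : 0 <= mu i + sigma mu i <= 121%:R / 100%:R.
  exact: add_sqrt_mul_subr_le.
have T0_bound j : 0 <= 1 - mu j + sigma mu j <= 121%:R / 100%:R.
  have -> : sigma mu j = Num.sqrt ((1 - mu j) * (1 - (1 - mu j))).
    by rewrite /sigma; congr Num.sqrt; ring.
  by apply: add_sqrt_mul_subr_le; case/andP: (mu01 j) => ? ?; apply/andP; split; lra.
split=> //; rewrite L1E exprD mulrC -!prodr_const.
apply: ler_pM; do ?[apply: prodr_ge0 => i _ | apply: ler_prod => i _] => //.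
- by case/andP: (T0_bound i).
- by case/andP: (T1_bound i).
Qed.
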